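(* Consider the scalar conservation law $u_t+H(u)_x=0$ and the following fully discrete nonstaggered Lagrangian–Eulerian scheme on a uniform mesh of spacing $h$ with cell averages $U_j^n$. For each $j$, let $U^n_{j-1/2}=\frac12(U^n_{j-1}+U^n_j)+\frac18(U'_j-U'_{j-1})$, where $U'_j$ are slope-limited variations, let $f^n_{j\pm1/2}=H(U^n_{j\pm1/2})/U^n_{j\pm1/2}$ (assuming $U^n_{j\pm1/2}\neq0$), $f^+=\max(f,0)$, $f^-=\max(-f,0)$, and define $$h_j^{n+1}=h+(f^n_{j+1/2}-f^n_{j-1/2})\Delta t,\qquad \overline U_j^{n+1}=\frac{h}{h_j^{n+1}}U_j^n,$$ $$U_j^{n+1}=\frac1h\Big(c_{-1,j}\overline U^{n+1}_{j-1}+c_{0,j}\overline U^{n+1}_j+c_{+1,j}\overline U^{n+1}_{j+1}\Big),$$ with $c_{-1,j}=f^+(U^n_{j-1/2})\Delta t=\max(f^n_{j-1/2},0)\Delta t$, $c_{+1,j}=f^-(U^n_{j+1/2})\Delta t=\max(-f^n_{j+1/2},0)\Delta t$ and $c_{0,j}=h-c_{-1,j}-c_{+1,j}$. Then, taking the limit $\Delta t\to0$, the scheme yields the ODE $$U_t=\frac1h\Big(U_{j-1}f^+_{j-\frac12}-U_jf^-_{j-\frac12}-U_jf^+_{j+\frac12}+U_{j+1}f^-_{j+\frac12}\Big),$$ where $U_j=U_j(t)$, $f^\pm_{j\pm1/2}=f^\pm(U_{j\pm1/2})$ and $U_t=\lim_{\Delta t\to0}\frac{U_j^{n+1}-U_j^n}{\Delta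 t}$; that is, the scheme is compatible with this ODE.
   Context: The quantities $f^n_{j\pm1/2}$ approximate the slopes of the ''no-flow curves'' bounding the Lagrangian–Eulerian control volumes; $h_j^{n+1}$ is the width of the evolved cell and $\overline U_j^{n+1}$ the conserved average on it, which is then projected back to the original mesh. *)

From mathcomp Require Import all_boot all_order all_algebra.
From mathcomp Require Import all_classical all_reals all_analysis.
Set Implicit Arguments. Unset Strict Implicit. Unset Printing Implicit Defensive.
Import Order.TTheory GRing.Theory Num.Theory.
Local Open Scope ring_scope.

(* Cell index j : int.  Interface j-1/2 is encoded by the integer j. *)
Section LE.
Variables (R : realType) (H : R -> R) (h : R) (U Up : int -> R).

Definition Uhalf (j : int) : R :=
  (U (j - 1) + U j) / 2 + (Up j - Up (j - 1)) / 8.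

Definition fhalf (j : int) : R := H (Uhalf j) / Uhalf j.

Definition fplus (f : R) : R := Num.max f 0.
Definition fminus (f : R) : R := Num.max (- f) 0.

Variable dt : R.

Definition hnew (j : int) : R := h + (fhalf (j + 1) - fhalf j) * dt.
Definition Ubar (j : int) : R := h / hnew j * U j.
Definition cm1 (j : int) : R := fplus (fhalf j) * dt.
Definition cp1 (j : int) : R := fminus (fhalf (j + 1)) * dt.
Definition c0 (j : int) : R := h - cm1 j - cp1 j.
Definition Unew (j : int) : R :=
  h^-1 * (cm1 j * Ubar (j - 1) + c0 j * Ubar j + cp1 j * Ubar (j + 1)).
End LE.

Definition ode_rhs (R : realType) (H : R -> R) (h : R) (U Up : int -> R)
  (j : int) : R :=
  h^-1 * (U (j - 1) * fplus (fhalf H U Up j)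
          - U j * fminus (fhalf H U Up j)
          - U j * fplus (fhalf H U Up (j + 1))
          + U (j + 1) * fminus (fhalf H U Up (j + 1))).

From mathcomp Require Import all_boot all_order all_algebra.
From mathcomp Require Import all_classical all_reals all_analysis.
From mathcomp Require Import ring lra.
Import Order.TTheory GRing.Theory Num.Theory.
Import numFieldNormedType.Exports.
Local Open Scope classical_set_scope.
Local Open Scope ring_scope.

(* Expanding the projection step, [U_j^{n+1} - U_j^n] is [dt] times a fixed
   combination of the evolved averages [Ubar], where the coefficient of
   [Ubar_j] picks up the cell growth [f_{j+1/2} - f_{j-1/2}] because
   [Ubar_j - U_j = -(f_{j+1/2} - f_{j-1/2}) dt Ubar_j / h].  The evolved cell
   widths tend to [h > 0] as [dt -> 0], so [Ubar_k -> U_k], and the splitting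
   [f = f^+ - f^-] turns the limit into the right-hand side of the ODE. *)

Lemma fplus_sub_fminus {R : realType} (x : R) : fplus x - fminus x = x.
Proof. by rewrite /fplus /fminus /Num.max; case: ifP => ?; case: ifP => ?; lra. Qed.

Section Compatibility.
Variables (R : realType) (H : R -> R) (h : R) (U Up : int -> R).
Hypothesis h_gt0 : 0 < h.

Local Notation f := (fhalf H U Up).

Lemma hnew_cvg (k : int) : (fun dt => hnew H h U Up dt k) @ 0^'+ --> h.
Proof.
apply: cvg_at_right_filter; rewrite -[X in _ --> X]addr0.
apply: cvgD; first exact: cvg_cst.
rewrite -[X in _ --> X](mulr0 (f (k + 1) - f k)).
by apply: cvgM; [exact: cvg_cst | exact: cvg_id].
Qed.

Lemma hnew_gt0_near (k : int) : \forall dt \near 0^'+, 0 < hnew H h U Up dt k.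
Proof. exact: (cvgr_gt h (hnew_cvg k) 0 h_gt0). Qed.

Lemma Ubar_cvg (k : int) : (fun dt => Ubar H h U Up dt k) @ 0^'+ --> U k.
Proof.
rewrite -[X in _ --> X]mul1r -(divff (lt0r_neq0 h_gt0)).
apply: cvgM; last exact: cvg_cst.
apply: cvgM; first exact: cvg_cst.
by apply: cvgV; [exact: lt0r_neq0 | exact: hnew_cvg].
Qed.

Lemma Unew_diff_quotientE (dt : R) (j : int) :
  dt != 0 -> hnew H h U Up dt j != 0 ->
  (Unew H h U Up dt j - U j) / dt =
    h^-1 * (fplus (f j) * Ubar H h U Up dt (j - 1)
            - (fplus (f j) + fminus (f (j + 1)) + f (j + 1) - f j)
              * Ubar H h U Up dt j
            + fminus (f (j + 1)) * Ubar H h U Up dt (j + 1)).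
Proof.
move=> dt_neq0 hj_neq0.
have h_neq0 : h != 0 by exact: lt0r_neq0.
have U_Ubar : U j = hnew H h U Up dt j / h * Ubar H h U Up dt j.
  by rewrite /Ubar mulrA mulrA divfK // divff // mul1r.
rewrite [in LHS]U_Ubar /Unew /c0 /cm1 /cp1; rewrite /hnew in hj_neq0 *.
by field; rewrite dt_neq0 h_neq0.
Qed.

Lemma ode_rhsE (j : int) :
  ode_rhs H h U Up j =
    h^-1 * (fplus (f j) * U (j - 1)
            - (fplus (f j) + fminus (f (j + 1)) + f (j + 1) - f j) * U j
            + fminus (f (j + 1)) * U (j + 1)).
Proof.
rewrite /ode_rhs; congr (_ * _).
rewrite -[X in _ = _ - (_ + _ + X - _) * _ + _](fplus_sub_fminus (f (j + 1))).
rewrite -[X in _ = _ - (_ + _ + _ - X) * _ + _](fplus_sub_fminus (f j)).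
ring.
Qed.

End Compatibility.

Theorem proposition2 (R : realType) (H : R -> R) (h : R) (U Up : int -> R)
  (j : int) :
  0 < h ->
  (forall k : int, Uhalf U Up k != 0) ->
  (fun dt : R => (Unew H h U Up dt j - U j) / dt) @ 0^'+ -->
    ode_rhs H h U Up j.
Proof.
move=> h_gt0 _.
rewrite ode_rhsE //.
apply: cvg_trans (near_eq_cvg _) _.
  near=> dt.
  have dt_gt0 : 0 < dt by near: dt; exact: nbhs_right_gt.
  rewrite Unew_diff_quotientE ?lt0r_neq0 //.
  by near: dt; exact: hnew_gt0_near.
apply: cvgM; first exact: cvg_cst.
apply: cvgD; first apply: cvgB.
all: by apply: cvgM; [exact: cvg_cst | exact: Ubar_cvg].
Unshelve. all: by end_near.
Qed.
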